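(* Let $\alpha>0$, $\mathfrak r\ge0$, $\eta:=\mathfrak r/\alpha$, and $L(\rho)=L_0+L_1\rho$ with $L_0\ge0$, $L_1>0$. For $\rho>0$ let $p(\rho):=\eta+\frac12\alpha^{-2}L(\rho)\rho^2-\rho$, $q(\rho):=\alpha^{-1}L(\rho)\rho$, call $\rho$ admissible ($\mathsf{Adm}(\rho)$) if $p(\rho)\le0$ and $q(\rho)<1$, and let $\mathcal{AD}:=\{\rho>0:\mathsf{Adm}(\rho)\}$. Assume $\mathcal{AD}\neq\emptyset$ and let $\rho_+:=\sup\mathcal{AD}$. Consider the bisection procedure: starting from $0<\rho_{\rm low}^{(0)}<\rho_{\rm up}^{(0)}$ with $\mathsf{Adm}(\rho_{\rm low}^{(0)})$ true and $\mathsf{Adm}(\rho_{\rm up}^{(0)})$ false, repeat $k_{\max}$ times: set $\rho_{\rm mid}:=(\rho_{\rm low}+\rho_{\rm up})/2$; if $\mathsf{Adm}(\rho_{\rm mid})$ then $\rho_{\rm low}\gets\rho_{\rm mid}$, else $\rho_{\rm up}\gets\rho_{\rm mid}$; finally return $\rho_{\rm low}$. Then every iteration preserves $\mathsf{Adm}(\rho_{\rm low})$ true and $\mathsf{Adm}(\rho_{\rm up})$ false, and the returned $\rho_{\rm low}$ is admissible and satisfies $$\rho_{\rm low}\le\rho_+\le\rho_{\rm up},\qquad \rho_{\rm up}-\rho_{\rm low}\le2^{-k_{\max}}\bigl(\rho_{\rm up}^{(0)}-\rho_{\rm low}^{(0)}\bigr).$$ Furthermore, consider the preceding shrinking phase: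 test $\rho=2\eta$; if inadmissible, set $\rho_{\rm up}:=2\eta$ and for $j=1,\dots,j_{\max}$ set $\rho_{\rm low}:=\rho_{\rm up}/2$, stop if $\mathsf{Adm}(\rho_{\rm low})$, otherwise $\rho_{\rm up}:=\rho_{\rm low}$; return fail if the last tested $\rho_{\rm low}$ is inadmissible. If this phase returns fail, then $\mathsf{Adm}(2\eta/2^j)$ is false for every $j=0,1,\dots,j_{\max}$. *)

From HB Require Import structures.
From mathcomp Require Import all_boot all_order all_algebra.
From mathcomp Require Import boolp classical_sets reals.
Set Implicit Arguments. Unset Strict Implicit. Unset Printing Implicit Defensive.
Import Order.TTheory GRing.Theory Num.Theory.
Local Open Scope ring_scope.
Local Open Scope classical_set_scope.

Section Defs.
Variables (R : realType) (alpha rr L0 L1 : R).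

Definition eta_ : R := rr / alpha.
Definition Lfun (rho : R) : R := L0 + L1 * rho.
Definition pfun (rho : R) : R :=
  eta_ + 2^-1 * alpha^-2 * Lfun rho * rho ^+ 2 - rho.
Definition qfun (rho : R) : R := alpha^-1 * Lfun rho * rho.

Definition Adm (rho : R) : bool := (pfun rho <= 0) && (qfun rho < 1).

Definition AD : set R := [set rho | 0 < rho /\ Adm rho].

Definition rho_plus : R := sup AD.

Definition bisect_step (st : R * R) : R * R :=
  let mid := (st.1 + st.2) / 2 in
  if Adm mid then (mid, st.2) else (st.1, mid).

Definition bisect (low0 up0 : R) (k : nat) : R * R :=
  iter k bisect_step (low0, up0).

Fixpoint shrink_loop (n : nat) (up : R) : option R :=
  match n with
  | 0%N => None
  | n'.+1 => let low := up / 2 in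
             if Adm low then Some low else shrink_loop n' low
  end.

Definition shrink_phase (jmax : nat) : option R :=
  if Adm (2 * eta_) then Some (2 * eta_) else shrink_loop jmax (2 * eta_).

End Defs.

From HB Require Import structures.
From mathcomp Require Import all_boot all_order all_algebra.
From mathcomp Require Import boolp classical_sets reals.
From mathcomp Require Import ring lra.
Set Implicit Arguments. Unset Strict Implicit. Unset Printing Implicit Defensive.
Import Order.TTheory GRing.Theory Num.Theory.
Local Open Scope ring_scope.
Local Open Scope classical_set_scope.

(* On [0, +oo) the cubic p is convex and q is nondecreasing, so the admissible
   set is an interval.  Hence an admissible rho_low below an inadmissible
   rho_up forces every admissible rho to lie below rho_up: a bracket
   (rho_low, rho_up) always encloses rho_+, and bisection keeps a bracket while
   halving its width.  The shrinking phase only ever tests 2 eta / 2^j. *)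

Section Admissibility.
Variables (R : realType) (alpha rr L0 L1 : R).
Hypotheses (halpha : 0 < alpha) (hL0 : 0 <= L0) (hL1 : 0 <= L1).

Local Notation pfun := (pfun alpha rr L0 L1).
Local Notation qfun := (qfun alpha L0 L1).
Local Notation Adm := (Adm alpha rr L0 L1).
Local Notation AD := (AD alpha rr L0 L1).

Lemma pfun_convex (a b c : R) : 0 <= a -> a <= b -> b <= c ->
  (c - a) * pfun b <= (c - b) * pfun a + (b - a) * pfun c.
Proof.
move=> a0 ab bc; rewrite -subr_ge0 /pfun /Lfun.
set k := 2^-1 * alpha^-2; set e := eta_ alpha rr.
have k0 : 0 <= k by rewrite /k mulr_ge0 // ?invr_ge0 // exprn_ge0 // ltW.
have -> : (c - b) * (e + k * (L0 + L1 * a) * a ^+ 2 - a)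
          + (b - a) * (e + k * (L0 + L1 * c) * c ^+ 2 - c)
          - (c - a) * (e + k * (L0 + L1 * b) * b ^+ 2 - b)
        = k * ((c - a) * (c - b) * (b - a)) * (L0 + L1 * (a + b + c)) by ring.
have [ca cb ba] : [/\ 0 <= c - a, 0 <= c - b & 0 <= b - a] by split; lra.
have abc : 0 <= L0 + L1 * (a + b + c) by rewrite addr_ge0 // mulr_ge0 //; lra.
by apply: mulr_ge0 abc; rewrite mulr_ge0 // mulr_ge0 // mulr_ge0.
Qed.

Lemma qfun_homo (b c : R) : 0 <= b -> b <= c -> qfun b <= qfun c.
Proof.
move=> b0 bc; rewrite /qfun /Lfun -!mulrA ler_pM2l ?invr_gt0 //.
by apply: ler_pM => //; rewrite ?addr_ge0 ?mulr_ge0 // lerD2l ler_wpM2l.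
Qed.

Lemma Adm_between (a b c : R) : 0 <= a -> a < b -> b < c ->
  Adm a -> Adm c -> Adm b.
Proof.
move=> a0 ab bc /andP[pa _] /andP[pc qc]; apply/andP; split.
- have ca : 0 < c - a by rewrite subr_gt0 (lt_trans ab).
  rewrite -(pmulr_rle0 _ ca); apply: le_trans (pfun_convex a0 (ltW ab) (ltW bc)) _.
  by rewrite -(addr0 0) lerD // mulr_ge0_le0 // subr_ge0 ltW.
- exact: le_lt_trans (qfun_homo (le_trans a0 (ltW ab)) (ltW bc)) qc.
Qed.

Definition bracket (st : R * R) : bool :=
  [&& 0 < st.1, st.1 < st.2, Adm st.1 & ~~ Adm st.2].

Lemma bracket_ubound (st : R * R) : bracket st -> ubound AD st.2.
Proof.
case/and4P=> l0 lu Al nAu x [_ Ax]; rewrite leNgt; apply/negP => ux.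
by move: nAu; rewrite (Adm_between (ltW l0) lu ux Al Ax).
Qed.

Lemma bracket_rho_plus (st : R * R) : bracket st ->
  st.1 <= rho_plus alpha rr L0 L1 <= st.2.
Proof.
move=> br; have ub := bracket_ubound br.
case/and4P: br => l0 _ Al _.
have ADl : AD st.1 by [].
have ne : AD !=set0 by exists st.1.
apply/andP; split; last exact: ge_sup ne ub.
by apply: sup_upper_bound ADl; split; last exists st.2.
Qed.

Lemma bracket_bisect_step (st : R * R) :
  bracket st -> bracket (bisect_step alpha rr L0 L1 st).
Proof.
case: st => l u /and4P[/= l0 lu Al nAu].
have lm : l < (l + u) / 2 by lra.
have mu : (l + u) / 2 < u by lra.
rewrite /bisect_step /=; case: ifP => Am; apply/and4P; split => //=;
  by [rewrite Am | apply: lt_trans lm].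
Qed.

Lemma bracket_bisect (low0 up0 : R) (k : nat) : bracket (low0, up0) ->
  bracket (bisect alpha rr L0 L1 low0 up0 k).
Proof. by move=> br; elim: k => //= k; apply: bracket_bisect_step. Qed.

End Admissibility.

Lemma bisect_width (R : realType) (alpha rr L0 L1 low0 up0 : R) (k : nat) :
  let st := bisect alpha rr L0 L1 low0 up0 k in
  st.2 - st.1 = (2 ^+ k)^-1 * (up0 - low0).
Proof.
elim: k => [|k IH] /=; first by rewrite expr0 invr1 mul1r.
rewrite exprS invfM -mulrA -IH /bisect_step.
by case: ifP => _ /=; field.
Qed.

Lemma shrink_loop_None (R : realType) (alpha rr L0 L1 u : R) (n : nat) :
  ~~ Adm alpha rr L0 L1 u -> shrink_loop alpha rr L0 L1 n u = None ->
  forall j, (j <= n)%N -> ~~ Adm alpha rr L0 L1 (u / 2 ^+ j).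
Proof.
elim: n u => [|n IH] u nAu /=.
  by move=> _ j; rewrite leqn0 => /eqP ->; rewrite expr0 divr1.
case: ifP => // Au2 loop [_ | j j_le]; first by rewrite expr0 divr1.
by rewrite exprS invfM mulrA; apply: IH; rewrite ?Au2.
Qed.

Lemma shrink_phase_None (R : realType) (alpha rr L0 L1 : R) (jmax : nat) :
  shrink_phase alpha rr L0 L1 jmax = None ->
  forall j, (j <= jmax)%N -> ~~ Adm alpha rr L0 L1 (2 * eta_ alpha rr / 2 ^+ j).
Proof. by rewrite /shrink_phase; case: ifP => // /negbT; apply: shrink_loop_None. Qed.

Theorem propositionA2 (R : realType) (alpha rr L0 L1 : R)
  (halpha : 0 < alpha) (hrr : 0 <= rr) (hL0 : 0 <= L0) (hL1 : 0 < L1)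
  (hAD : AD alpha rr L0 L1 !=set0)
  (low0 up0 : R) (kmax jmax : nat)
  (hlow0 : 0 < low0) (hlu : low0 < up0)
  (hAlow0 : Adm alpha rr L0 L1 low0) (hAup0 : ~~ Adm alpha rr L0 L1 up0) :
  (forall k : nat, (k <= kmax)%N ->
     Adm alpha rr L0 L1 (bisect alpha rr L0 L1 low0 up0 k).1 /\
     ~~ Adm alpha rr L0 L1 (bisect alpha rr L0 L1 low0 up0 k).2) /\
  (let low := (bisect alpha rr L0 L1 low0 up0 kmax).1 in
   let up := (bisect alpha rr L0 L1 low0 up0 kmax).2 in
   Adm alpha rr L0 L1 low /\
   low <= rho_plus alpha rr L0 L1 <= up /\
   up - low <= (2 ^+ kmax)^-1 * (up0 - low0)) /\
  (shrink_phase alpha rr L0 L1 jmax = None ->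
   forall j : nat, (j <= jmax)%N ->
     ~~ Adm alpha rr L0 L1 (2 * eta_ alpha rr / 2 ^+ j)).
Proof.
have br0 : bracket alpha rr L0 L1 (low0, up0) by apply/and4P.
have br k := bracket_bisect k br0.
split; [|split; last exact: shrink_phase_None].
  by move=> k _; case/and4P: (br k).
move=> low up; have brk := br kmax; have [_ _ Alow _] := and4P brk.
split => //; split; last by rewrite bisect_width.
exact (bracket_rho_plus halpha hL0 (ltW hL1) brk).
Qed.
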